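(* Let $\mathcal{A}$ be a triangular algebra over a field $F$ with $\operatorname{char}(F)\neq2$. Then $\operatorname{QJDer}(\mathcal{A})=\operatorname{Cent}(\mathcal{A})+\operatorname{Der}(\mathcal{A})$.
   Context: A triangular algebra is an algebra of the form $\mathcal{A}=\begin{pmatrix}B & M\\ 0 & C\end{pmatrix}$ (formal matrix operations), where $B,C$ are unital algebras and $M$ is a $(B,C)$-bimodule that is faithful as a left $B$-module and as a right $C$-module. $x\circ y=xy+yx$. $\operatorname{QJDer}(\mathcal{A})$: linear $f:\mathcal{A}\to\mathcal{A}$ for which there is a linear $h$ with $f(x)\circ y+x\circ f(y)=h(x\circ y)$ for all $x,y$. $\operatorname{Cent}(\mathcal{A})$: linear $f$ with $f(xy)=f(x)y=xf(y)$. $\operatorname{Der}(\mathcal{A})$: linear $d$ with $d(xy)=d(x)y+xd(y)$. Sums of sets of maps are sets of pointwise sums. *)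

From HB Require Import structures.
From mathcomp Require Import all_boot all_order all_algebra.
Set Implicit Arguments. Unset Strict Implicit. Unset Printing Implicit Defensive.
Import Order.TTheory GRing.Theory Num.Theory.
Local Open Scope ring_scope.

Section Triangular.
Variables (F : fieldType) (B C : algType F) (M : lmodType F).
Variables (lact : B -> M -> M) (ract : M -> C -> M).

Definition is_bimodule : Prop :=
  (forall b m1 m2, lact b (m1 + m2) = lact b m1 + lact b m2) /\
      (forall b1 b2 m, lact (b1 + b2) m = lact b1 m + lact b2 m) /\
      (forall (a : F) b m, lact (a *: b) m = a *: lact b m /\ lact b (a *: m) = a *: lact b m) /\
      (forall b1 b2 m, lact (b1 * b2) m = lact b1 (lact b2 m)) /\
      (forall m, lact 1 m = m) /\
      (forall c m1 m2, ract (m1 + m2) c = ract m1 c + ract m2 c) /\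
      (forall c1 c2 m, ract m (c1 + c2) = ract m c1 + ract m c2) /\
      (forall (a : F) c m, ract m (a *: c) = a *: ract m c /\ ract (a *: m) c = a *: ract m c) /\
      (forall c1 c2 m, ract m (c1 * c2) = ract (ract m c1) c2) /\
      (forall m, ract m 1 = m) /\
      (forall b c m, ract (lact b m) c = lact b (ract m c)).

Definition faithful_left : Prop := forall b : B, (forall m : M, lact b m = 0) -> b = 0.
Definition faithful_right : Prop := forall c : C, (forall m : M, ract m c = 0) -> c = 0.

(* The triangular algebra [[B, M], [0, C]]: elements (b, m, c); its F-module
   structure is the product one; multiplication is formal matrix product. *)
Definition tri := (B * M * C)%type.

Definition tmul (x y : tri) : tri :=
  let: (b, m, c) := x in let: (b', m', c') := y in
  (b * b', lact b m' + ract m c', c * c').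

Definition tjordan (x y : tri) : tri := tmul x y + tmul y x.

Definition is_linear (f : tri -> tri) : Prop :=
  forall (a : F) (x y : tri), f (a *: x + y) = a *: f x + f y.

Definition is_QJDer (f : tri -> tri) : Prop :=
  is_linear f /\ exists h : tri -> tri, is_linear h /\
    forall x y, tjordan (f x) y + tjordan x (f y) = h (tjordan x y).

Definition is_Cent (f : tri -> tri) : Prop :=
  is_linear f /\ forall x y, f (tmul x y) = tmul (f x) y /\ f (tmul x y) = tmul x (f y).

Definition is_Der (d : tri -> tri) : Prop :=
  is_linear d /\ forall x y, d (tmul x y) = tmul (d x) y + tmul x (d y).
End Triangular.

From HB Require Import structures.
From mathcomp Require Import all_boot all_order all_algebra.
Import GRing.Theory.
Local Open Scope ring_scope.

(* Write z := f 1.  Taking y = 1 in the defining identity of a quasi-Jordan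
   derivation gives 2 h(x) = 2 f(x) + x ∘ z, which eliminates h.  Testing the
   resulting identity on the idempotent e = (1, 0, 0), against e and then
   against (0, m, 0), shows that z = (z1, 0, z3) with z1 m = m z3, so z is
   central by faithfulness; then x |-> z x lies in Cent(A) and f - z(.) is a
   Jordan derivation.  A Jordan derivation d of a triangular algebra is a
   derivation: its values on e and on B, M, C separately give
   d(b, m, c) = (dB b, b q - q c + dM m, dC c), where dM is a (dB, dC)-derivation
   of the bimodule, so faithfulness forces dB and dC to be derivations, and a
   map of this shape is a derivation.  Conversely g + d with g in Cent(A) and d
   in Der(A) satisfies the identity with h = 2 g + d. *)

Lemma addrI0 {V : zmodType} (x y : V) : x + y = x -> y = 0.
Proof. by rewrite -[x in RHS]addr0 => /addrI. Qed.

Section Halving.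
Local Set Implicit Arguments.
Local Unset Strict Implicit.
Variables (F : fieldType) (V : lmodType F).
Hypothesis two_neq0 : (2%:R : F) != 0.

Lemma double_inj (x y : V) : x + x = y + y -> x = y.
Proof. by rewrite -!mulr2n -!scaler_nat => /(scalerI two_neq0). Qed.

Lemma double_eq0 (x : V) : x + x = 0 -> x = 0.
Proof. by rewrite -[0 in RHS]addr0 => /double_inj. Qed.

End Halving.

Section TriangularAlgebra.
Local Set Implicit Arguments.
Variables (F : fieldType) (B C : algType F) (M : lmodType F).
Variables (lact : B -> M -> M) (ract : M -> C -> M).
Hypothesis bimodM : is_bimodule lact ract.

Lemma lactDr b : {morph lact b : m1 m2 / m1 + m2}.
Proof. by move=> ? ?; case: bimodM. Qed.
Lemma lactDl m : {morph lact^~ m : b1 b2 / b1 + b2}.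
Proof. by move=> ? ?; case: bimodM => _ []. Qed.
Lemma lactZl a b m : lact (a *: b) m = a *: lact b m.
Proof. by case: bimodM => _ [_ [/(_ a b m) []]]. Qed.
Lemma lactZr a b m : lact b (a *: m) = a *: lact b m.
Proof. by case: bimodM => _ [_ [/(_ a b m) []]]. Qed.
Lemma lactM b1 b2 m : lact (b1 * b2) m = lact b1 (lact b2 m).
Proof. by case: bimodM => _ [_ [_ []]]. Qed.
Lemma lact1 m : lact 1 m = m.
Proof. by case: bimodM => _ [_ [_ [_ []]]]. Qed.
Lemma ractDl c : {morph ract^~ c : m1 m2 / m1 + m2}.
Proof. by move=> ? ?; case: bimodM => _ [_ [_ [_ [_ []]]]]. Qed.
Lemma ractDr m : {morph ract m : c1 c2 / c1 + c2}.
Proof. by move=> ? ?; case: bimodM => _ [_ [_ [_ [_ [_ []]]]]]. Qed.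
Lemma ractZr a c m : ract m (a *: c) = a *: ract m c.
Proof. by case: bimodM => _ [_ [_ [_ [_ [_ [_ [/(_ a c m) []]]]]]]]. Qed.
Lemma ractZl a c m : ract (a *: m) c = a *: ract m c.
Proof. by case: bimodM => _ [_ [_ [_ [_ [_ [_ [/(_ a c m) []]]]]]]]. Qed.
Lemma ractM c1 c2 m : ract m (c1 * c2) = ract (ract m c1) c2.
Proof. by case: bimodM => _ [_ [_ [_ [_ [_ [_ [_ []]]]]]]]. Qed.
Lemma ract1 m : ract m 1 = m.
Proof. by case: bimodM => _ [_ [_ [_ [_ [_ [_ [_ [_ []]]]]]]]]. Qed.
Lemma lractA b m c : ract (lact b m) c = lact b (ract m c).
Proof. by case: bimodM => _ [_ [_ [_ [_ [_ [_ [_ [_ [_ ]]]]]]]]]. Qed.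

Lemma lact0r b : lact b 0 = 0.
Proof. by rewrite -(scale0r 0) lactZr !scale0r. Qed.
Lemma lact0l m : lact 0 m = 0.
Proof. by rewrite -(scale0r 0) lactZl !scale0r. Qed.
Lemma ract0l c : ract 0 c = 0.
Proof. by rewrite -(scale0r 0) ractZl !scale0r. Qed.
Lemma ract0r m : ract m 0 = 0.
Proof. by rewrite -(scale0r 0) ractZr !scale0r. Qed.
Lemma lactNr b m : lact b (- m) = - lact b m.
Proof. by rewrite -scaleN1r lactZr scaleN1r. Qed.
Lemma lactBl m b1 b2 : lact (b1 - b2) m = lact b1 m - lact b2 m.
Proof. by rewrite lactDl -[- b2]scaleN1r lactZl scaleN1r. Qed.
Lemma ractNl c m : ract (- m) c = - ract m c.
Proof. by rewrite -scaleN1r ractZl scaleN1r. Qed.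
Lemma ractBr m c1 c2 : ract m (c1 - c2) = ract m c1 - ract m c2.
Proof. by rewrite ractDr -[- c2]scaleN1r ractZr scaleN1r. Qed.

Let tri_simpE := (mulr0, mul0r, lact0r, lact0l, ract0r, ract0l, addr0, add0r).

Local Notation tri := (tri B C M).
Local Notation tmul := (tmul lact ract).
Local Notation tjordan := (tjordan lact ract).
Implicit Types (f g h d : tri -> tri) (x y : tri).

Local Notation tri1 := (((1, 0), 1) : tri).
Local Notation tri_e := (((1, 0), 0) : tri).

Lemma triD b m c b' m' c' :
  ((b, m), c) + ((b', m'), c') = ((b + b', m + m'), c + c') :> tri.
Proof. by []. Qed.

Lemma triZ a b m c : a *: ((b, m), c) = ((a *: b, a *: m), a *: c) :> tri.
Proof. by []. Qed.

Lemma tmulE b m c b' m' c' :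
  tmul ((b, m), c) ((b', m'), c') = ((b * b', lact b m' + ract m c'), c * c').
Proof. by []. Qed.

Lemma tmulDl : left_distributive tmul +%R.
Proof.
move=> [[b1 m1] c1] [[b2 m2] c2] [[b m] c].
by rewrite !tmulE mulrDl mulrDl lactDl ractDl addrACA.
Qed.

Lemma tmulDr : right_distributive tmul +%R.
Proof.
move=> [[b m] c] [[b1 m1] c1] [[b2 m2] c2].
by rewrite !tmulE mulrDr mulrDr lactDr ractDr addrACA.
Qed.

Lemma tmulZr a x y : tmul x (a *: y) = a *: tmul x y.
Proof.
case: x => [[b m] c]; case: y => [[b' m'] c'].
by rewrite triZ !tmulE triZ -!scalerAr lactZr ractZr scalerDr.
Qed.

Lemma tmulA : associative tmul.
Proof.
move=> [[b1 m1] c1] [[b2 m2] c2] [[b3 m3] c3].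
by rewrite !tmulE !mulrA lactM ractM lactDr ractDl lractA addrA.
Qed.

Lemma tmul1l : left_id tri1 tmul.
Proof. by move=> [[b m] c]; rewrite tmulE !mul1r lact1 ract0l addr0. Qed.

Lemma tmul1r : right_id tri1 tmul.
Proof. by move=> [[b m] c]; rewrite tmulE !mulr1 ract1 lact0r add0r. Qed.

Lemma tjordanC : commutative tjordan.
Proof. by move=> x y; rewrite /tjordan addrC. Qed.

Lemma tjordanDl : left_distributive tjordan +%R.
Proof. by move=> x1 x2 y; rewrite /tjordan tmulDl tmulDr addrACA. Qed.

Lemma tjordanDr : right_distributive tjordan +%R.
Proof. by move=> x y1 y2; rewrite !(tjordanC x) tjordanDl. Qed.

Lemma tjordanE b m c b' m' c' :
  tjordan ((b, m), c) ((b', m'), c') =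
  ((b * b' + b' * b, lact b m' + ract m c' + (lact b' m + ract m' c)), c * c' + c' * c).
Proof. by []. Qed.

Lemma tjordan1r x : tjordan x tri1 = x + x.
Proof. by rewrite /tjordan tmul1l tmul1r. Qed.

Lemma tjordan_el b m c : tjordan tri_e ((b, m), c) = ((b + b, m), 0).
Proof. by rewrite tjordanE mulr1 mul1r lact1 !tri_simpE. Qed.

Lemma tjordan_eB b : tjordan tri_e ((b, 0), 0) = ((b, 0), 0) + ((b, 0), 0).
Proof. by rewrite tjordan_el triD !addr0. Qed.

Lemma linear_morphD f : is_linear f -> {morph f : x y / x + y}.
Proof. by move=> fL x y; rewrite -[x]scale1r fL !scale1r. Qed.

Lemma linear_morph0 f : is_linear f -> f 0 = 0.
Proof. by move=> fL; apply: (addrI (f 0)); rewrite -linear_morphD // !addr0. Qed.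

Lemma is_linearD f g : is_linear f -> is_linear g -> is_linear (fun x => f x + g x).
Proof. by move=> fL gL a x y; rewrite fL gL scalerDr addrACA. Qed.

Lemma is_linearB f g : is_linear f -> is_linear g -> is_linear (fun x => f x - g x).
Proof. by move=> fL gL a x y; rewrite fL gL scalerBr addrACA opprD. Qed.

Definition is_JDer (d : tri -> tri) : Prop :=
  is_linear d /\ forall x y, d (tjordan x y) = tjordan (d x) y + tjordan x (d y).

Lemma Cent_tjordanl g x y : is_Cent lact ract g -> tjordan (g x) y = g (tjordan x y).
Proof.
case=> gL gM; rewrite /tjordan linear_morphD //.
by case: (gM x y) => -> _; case: (gM y x) => _ ->.
Qed.

Lemma Cent_tjordanr g x y : is_Cent lact ract g -> tjordan x (g y) = g (tjordan x y).
Proof. by move=> gC; rewrite tjordanC Cent_tjordanl // tjordanC. Qed.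

Lemma Der_JDer d : is_Der lact ract d -> is_JDer d.
Proof.
case=> dL dM; split=> // x y.
by rewrite /tjordan linear_morphD // !dM [tmul (d y) x + _]addrC addrACA.
Qed.

Lemma QJDer_Cent_JDer f g d : is_Cent lact ract g -> is_JDer d ->
  (forall x, f x = g x + d x) -> is_QJDer lact ract f.
Proof.
move=> gC [dL dJ] fE; have gL := gC.1.
split; first by move=> a x y; rewrite !fE; apply: is_linearD.
exists (fun x => g x + g x + d x); split; first by apply: is_linearD => //; apply: is_linearD.
move=> x y; rewrite !fE tjordanDl tjordanDr Cent_tjordanl // Cent_tjordanr //.
by rewrite addrACA dJ.
Qed.

Definition tcentral (z : tri) : Prop := forall x, tmul z x = tmul x z.

Lemma tcentral_tjordanl z x y : tcentral z -> tjordan (tmul z x) y = tmul z (tjordan x y).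
Proof. by move=> zC; rewrite /tjordan tmulDr tmulA -zC !tmulA. Qed.

Lemma tcentral_tjordanr z x y : tcentral z -> tjordan x (tmul z y) = tmul z (tjordan x y).
Proof. by move=> zC; rewrite tjordanC tcentral_tjordanl // tjordanC. Qed.

Lemma tcentral_Cent z : tcentral z -> is_Cent lact ract (tmul z).
Proof.
move=> zC; split=> [a x y|x y]; first by rewrite tmulDr tmulZr.
by split; rewrite tmulA // zC -tmulA.
Qed.

Section Faithful.
Hypotheses (faithL : faithful_left lact) (faithR : faithful_right ract).
Hypothesis two_neq0 : (2%:R : F) != 0.

Lemma lact_inj b1 b2 : (forall m, lact b1 m = lact b2 m) -> b1 = b2.
Proof. by move=> E; apply/subr0_eq/faithL => m; rewrite lactBl E subrr. Qed.

Lemma ract_inj c1 c2 : (forall m, ract m c1 = ract m c2) -> c1 = c2.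
Proof. by move=> E; apply/subr0_eq/faithR => m; rewrite ractBr E subrr. Qed.

Lemma tcentral_diag z1 z3 : (forall m, lact z1 m = ract m z3) -> tcentral ((z1, 0), z3).
Proof.
move=> z1z3 [[b m] c].
have z1C : z1 * b = b * z1 by apply: lact_inj => m'; rewrite !lactM !z1z3 lractA.
have z3C : z3 * c = c * z3 by apply: ract_inj => m'; rewrite !ractM -!z1z3 lractA.
by rewrite !tmulE ract0l lact0r addr0 add0r z1z3 z1C z3C.
Qed.

Section QuasiJordanDerivation.
Variables f h : tri -> tri.
Hypotheses (fL : is_linear f) (hL : is_linear h).
Hypothesis fhJ : forall x y, tjordan (f x) y + tjordan x (f y) = h (tjordan x y).

Lemma QJDer_double_h x : h x + h x = f x + f x + tjordan x (f tri1).
Proof. by have := fhJ x tri1; rewrite !tjordan1r linear_morphD // => <-. Qed.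

Lemma QJDer_unit_central : tcentral (f tri1).
Proof.
case Ez: (f tri1) => [[z1 z2] z3]; case Ee: (f tri_e) => [[p q] r].
have [pz1 z2_0 r0] : [/\ p = z1, z2 = 0 & r = 0].
  have := fhJ tri_e tri_e; rewrite (tjordanC _ tri_e) Ee tjordan_el tjordan_eB.
  rewrite linear_morphD // QJDer_double_h Ee Ez tjordan_el !triD /= !addr0.
  by case=> /addrI/(double_inj two_neq0) -> /esym/addrI0 -> /esym/(double_eq0 two_neq0).
subst p z2 r; apply: tcentral_diag => m.
case Em: (f ((0, m), 0)) => [[a n] g].
have := fhJ tri_e ((0, m), 0); rewrite Ee Em !tjordan_el tjordanE !addr0.
move/(congr1 (fun v => v + v)); rewrite QJDer_double_h Em Ez tjordanE !triD /= !tri_simpE.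
by case=> _ + _; rewrite addrACA addrC => /addrI /addIr.
Qed.

Lemma QJDer_sub_JDer : is_JDer (fun x => f x - tmul (f tri1) x).
Proof.
have zC := QJDer_unit_central; set z := f tri1 in zC *.
have hE w : h w = f w + tmul z w.
  by apply: (double_inj two_neq0); rewrite QJDer_double_h /tjordan -zC addrACA.
set d := fun x => _; have fE w : f w = d w + tmul z w by rewrite subrK.
split=> [|x y]; first by apply: is_linearB => // a x y; rewrite tmulDr tmulZr.
have := fhJ x y; rewrite hE !fE tjordanDl tjordanDr.
rewrite tcentral_tjordanl // tcentral_tjordanr // addrACA -[d _ + _ + _]addrA.
by move=> /addIr ->.
Qed.

End QuasiJordanDerivation.

Section JordanDerivation.
Variable d : tri -> tri.
Hypothesis dJD : is_JDer d.
Let dL : is_linear d := dJD.1.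
Let dJ : forall x y, d (tjordan x y) = tjordan (d x) y + tjordan x (d y) := dJD.2.

Let q := (d tri_e).1.2.
Let dB b := (d ((b, 0), 0)).1.1.
Let dM m := (d ((0, m), 0)).1.2.
Let dC c := (d ((0, 0), c)).2.

Lemma JDer_e : d tri_e = ((0, q), 0).
Proof.
rewrite /q; case Ee: (d tri_e) => [[p n] r] /=.
have := dJ tri_e tri_e.
rewrite tjordan_eB linear_morphD // (tjordanC _ tri_e) Ee tjordan_el !triD /= addr0.
by case=> /esym/addrI0/(double_eq0 two_neq0) -> /(double_eq0 two_neq0) ->.
Qed.

Lemma JDer_M m : d ((0, m), 0) = ((0, dM m), 0).
Proof.
rewrite /dM; case Em: (d ((0, m), 0)) => [[a n] g] /=.
have := dJ tri_e ((0, m), 0).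
rewrite JDer_e tjordan_el tjordanE !tri_simpE Em tjordan_el.
by case=> /esym/addrI0 -> ->.
Qed.

Lemma JDer_B b : d ((b, 0), 0) = ((dB b, lact b q), 0).
Proof.
rewrite /dB; case Eb: (d ((b, 0), 0)) => [[a n] g] /=.
have := dJ tri_e ((b, 0), 0).
rewrite tjordan_eB linear_morphD // JDer_e Eb tjordan_el tjordanE !triD !tri_simpE.
by case=> /addIr -> /(double_eq0 two_neq0) ->.
Qed.

Lemma JDer_C c : d ((0, 0), c) = ((0, - ract q c), dC c).
Proof.
rewrite /dC; case Ec: (d ((0, 0), c)) => [[a n] g] /=.
have := dJ tri_e ((0, 0), c).
rewrite JDer_e Ec !tjordan_el tjordanE !triD !tri_simpE linear_morph0 //.
by case=> /esym/(double_eq0 two_neq0) -> /esym/addr0_eq <-.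
Qed.

Lemma dM_lact b m : dM (lact b m) = lact (dB b) m + lact b (dM m).
Proof.
have := dJ ((b, 0), 0) ((0, m), 0).
rewrite [d ((b, 0), 0)]JDer_B [d ((0, m), 0)]JDer_M !tjordanE !tri_simpE JDer_M.
by rewrite triD !tri_simpE; case.
Qed.

Lemma dM_ract m c : dM (ract m c) = ract (dM m) c + ract m (dC c).
Proof.
have := dJ ((0, m), 0) ((0, 0), c).
rewrite [d ((0, 0), c)]JDer_C [d ((0, m), 0)]JDer_M !tjordanE !tri_simpE JDer_M.
by rewrite triD !tri_simpE; case.
Qed.

Lemma dB_mul b b' : dB (b * b') = dB b * b' + b * dB b'.
Proof.
apply: lact_inj => m.
have dBm b1 m1 : lact (dB b1) m1 = dM (lact b1 m1) - lact b1 (dM m1).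
  by rewrite dM_lact addrK.
by rewrite lactDl [LHS]dBm !lactM !dM_lact lactDr addrA addrK.
Qed.

Lemma dC_mul c c' : dC (c * c') = dC c * c' + c * dC c'.
Proof.
apply: ract_inj => m.
have dCm c1 m1 : ract m1 (dC c1) = dM (ract m1 c1) - ract (dM m1) c1.
  by rewrite dM_ract addrC addKr.
rewrite ractDr [LHS]dCm !ractM !dM_ract ractDl.
by rewrite -[_ + _ + ract (ract m c) _]addrA addrC addrK.
Qed.

Lemma dMD : {morph dM : m1 m2 / m1 + m2}.
Proof.
move=> m1 m2; rewrite /dM.
have -> : ((0, m1 + m2), 0) = ((0, m1), 0) + ((0, m2), 0) :> tri by rewrite triD !addr0.
by rewrite linear_morphD.
Qed.

Lemma JDerE b m c : d ((b, m), c) = ((dB b, lact b q - ract q c + dM m), dC c).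
Proof.
have -> : ((b, m), c) = ((b, 0), 0) + ((0, m), 0) + ((0, 0), c) :> tri.
  by rewrite !triD !tri_simpE.
by rewrite !linear_morphD // JDer_B JDer_M JDer_C !triD !tri_simpE /= addrAC.
Qed.

Lemma JDer_Der : is_Der lact ract d.
Proof.
split=> // -[[b m] c] [[b' m'] c'].
rewrite tmulE !JDerE !tmulE triD; congr ((_, _), _); rewrite ?dB_mul ?dC_mul //.
rewrite dMD dM_lact dM_ract lactM ractM !ractDl !lactDr ractNl lactNr lractA.
(* the two copies of b (q c') cancel *)
by rewrite [RHS]+%R.[AC ((1*3)*4) ((2*6)*((5*3)*((1*7)*(4*8))))] subrr add0r.
Qed.

End JordanDerivation.
End Faithful.
End TriangularAlgebra.

Theorem corollary4p5 (F : fieldType) (B C : algType F) (M : lmodType F)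
    (lact : B -> M -> M) (ract : M -> C -> M) :
  (2%:R : F) != 0 ->
  is_bimodule lact ract -> faithful_left lact -> faithful_right ract ->
  forall f : tri B C M -> tri B C M,
    is_QJDer lact ract f <->
    exists g d : tri B C M -> tri B C M,
      [/\ is_Cent lact ract g, is_Der lact ract d & forall x, f x = g x + d x].
Proof.
move=> two_neq0 bimodM faithL faithR f; split.
- case=> fL [h [hL fhJ]]; pose z := f ((1, 0), 1).
  exists (tmul lact ract z), (fun x => f x - tmul lact ract z x); split.
  + exact: (tcentral_Cent bimodM
              (QJDer_unit_central bimodM faithL faithR two_neq0 f hL fhJ)).
  + exact: (JDer_Der bimodM faithL faithR two_neq0
              (QJDer_sub_JDer bimodM faithL faithR two_neq0 fL hL fhJ)).
  + by move=> x; rewrite addrC subrK.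
- case=> g [d [gC dD fE]].
  exact: (QJDer_Cent_JDer bimodM f gC (Der_JDer dD) fE).
Qed.
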